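(* Let $f:(L_1,[\cdot,\cdot]_1,\alpha_1)\to(L_2,[\cdot,\cdot]_2,\alpha_2)$ be a surjective morphism of Hom-Lie algebras over a field $F$. If $\mu_A$ is a fuzzy Hom-Lie subalgebra of $L_1$, then the fuzzy set $\mu_{f(A)}$ on $L_2$, defined by $\mu_{f(A)}(y)=\sup_{x\in f^{-1}(y)}\mu_A(x)$ for $y\in f(L_1)$ and $\mu_{f(A)}(y)=0$ otherwise, is a fuzzy Hom-Lie subalgebra of $L_2$.
   Context: A Hom-Lie algebra over $F$ is a triple $(L,[\cdot,\cdot],\alpha)$ with $L$ an $F$-vector space, $\alpha:L\to L$ linear and $[\cdot,\cdot]$ bilinear, skew-symmetric, satisfying $[\alpha(x),[y,z]]+[\alpha(y),[z,x]]+[\alpha(z),[x,y]]=0$. A morphism of Hom-Lie algebras is a linear map $f$ with $f([x,y]_1)=[f(x),f(y)]_2$ and $f\circ\alpha_1=\alpha_2\circ f$. A fuzzy subset $\mu:L\to[0,1]$ is a fuzzy Hom-Lie subalgebra if for all $x,y\in L$, $c\in F$: $\mu(x+y)\ge\min\{\mu(x),\mu(y)\}$, $\mu(cx)\ge\mu(x)$, $\mu([x,y])\ge\min\{\mu(x),\mu(y)\}$, $\mu(\alpha(x))\ge\mu(x)$. *)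

From HB Require Import structures.
From mathcomp Require Import all_boot all_order all_algebra.
From mathcomp Require Import boolp classical_sets reals.
Set Implicit Arguments. Unset Strict Implicit. Unset Printing Implicit Defensive.
Import Order.TTheory GRing.Theory Num.Theory.
Local Open Scope ring_scope.
Local Open Scope classical_set_scope.

Definition is_hom_lie (F : fieldType) (L : lmodType F)
  (br : L -> L -> L) (al : L -> L) : Prop :=
  [/\ (forall (c : F) x y, al (c *: x + y) = c *: al x + al y),
      (forall (c : F) x y z, br (c *: x + y) z = c *: br x z + br y z),
      (forall (c : F) x y z, br z (c *: x + y) = c *: br z x + br z y),
      (forall x y, br x y = - br y x) &
      (forall x y z, br (al x) (br y z) + br (al y) (br z x) + br (al z) (br x y) = 0)].

Definition is_hom_lie_morphism (F : fieldType) (L1 L2 : lmodType F)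
  (br1 : L1 -> L1 -> L1) (al1 : L1 -> L1)
  (br2 : L2 -> L2 -> L2) (al2 : L2 -> L2) (f : L1 -> L2) : Prop :=
  [/\ (forall (c : F) x y, f (c *: x + y) = c *: f x + f y),
      (forall x y, f (br1 x y) = br2 (f x) (f y)) &
      (forall x, f (al1 x) = al2 (f x))].

Definition is_fuzzy_subset (R : realType) (T : Type) (mu : T -> R) : Prop :=
  forall x, 0 <= mu x <= 1.

Definition is_fuzzy_hom_lie_subalgebra (R : realType) (F : fieldType)
  (L : lmodType F) (br : L -> L -> L) (al : L -> L) (mu : L -> R) : Prop :=
  [/\ is_fuzzy_subset mu,
      (forall x y, Num.min (mu x) (mu y) <= mu (x + y)),
      (forall (c : F) x, mu x <= mu (c *: x)),
      (forall x y, Num.min (mu x) (mu y) <= mu (br x y)) &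
      (forall x, mu x <= mu (al x))].

Definition fuzzy_image (R : realType) (T1 T2 : Type) (f : T1 -> T2)
  (mu : T1 -> R) : T2 -> R :=
  fun y => if pselect (exists x, f x = y)
           then sup [set mu x | x in f @^-1` [set y]]
           else 0.

From HB Require Import structures.
From mathcomp Require Import all_boot all_order all_algebra.
From mathcomp Require Import boolp classical_sets reals.

(* Every closure property of mu (under +, scaling, the bracket, the twist)
   transfers along f because f intertwines the operations.  For a unary
   operation g over h, each x in the fibre of y has g x in the fibre of h y.
   For a binary one, if both sups at y1, y2 exceeded c, the value at h y1 y2,
   there would be x1, x2 in the two fibres with mu x1, mu x2 > c, although
   g x1 x2 lies in the fibre of h y1 y2. *)

Set Implicit Arguments.
Unset Strict Implicit.
Unset Printing Implicit Defensive.

Import Order.TTheory GRing.Theory Num.Theory.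
Local Open Scope ring_scope.
Local Open Scope classical_set_scope.

Section LinearCombination.
Variables (F : fieldType) (L1 L2 : lmodType F) (f : L1 -> L2).
Hypothesis f_lincomb : forall (c : F) x y, f (c *: x + y) = c *: f x + f y.

Lemma lincomb_map0 : f 0 = 0.
Proof.
have := f_lincomb 1 0 0; rewrite !scale1r addr0 => f0D.
by apply: (addrI (f 0)); rewrite addr0 -f0D.
Qed.

Lemma lincomb_mapD x y : f (x + y) = f x + f y.
Proof. by have := f_lincomb 1 x y; rewrite !scale1r. Qed.

Lemma lincomb_mapZ (c : F) x : f (c *: x) = c *: f x.
Proof. by have := f_lincomb c x 0; rewrite !addr0 lincomb_map0 addr0. Qed.

End LinearCombination.

Lemma fuzzy_subset_has_ubound (R : realType) (T : Type) (mu : T -> R) :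
  is_fuzzy_subset mu -> has_ubound (range mu).
Proof. by move=> mu01; exists 1 => _ [x _ <-]; case/andP: (mu01 x). Qed.

Section FuzzyImage.
Variables (R : realType) (T1 T2 : Type) (f : T1 -> T2) (mu : T1 -> R).
Hypothesis mu_ub : has_ubound (range mu).

Let fibre_values y := [set mu x | x in f @^-1` [set y]].

Lemma fuzzy_imageE y :
  (exists x, f x = y) -> fuzzy_image f mu y = sup (fibre_values y).
Proof. by move=> fy; rewrite /fuzzy_image; case: pselect. Qed.

Lemma fuzzy_image_ge x : mu x <= fuzzy_image f mu (f x).
Proof.
rewrite fuzzy_imageE; last by exists x.
apply: ub_le_sup; last by exists x.
by apply: subset_has_ubound mu_ub => _ [z _ <-]; exists z.
Qed.

Lemma fuzzy_image_le y c :
  (exists x, f x = y) -> (forall x, f x = y -> mu x <= c) ->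
  fuzzy_image f mu y <= c.
Proof.
move=> [x fx] mu_le; rewrite fuzzy_imageE; last by exists x.
by apply: ge_sup => [|_ [z fz <-]]; [exists (mu x), x | exact: mu_le].
Qed.

Lemma fuzzy_image_gt y c :
  (exists x, f x = y) -> c < fuzzy_image f mu y -> exists2 x, f x = y & c < mu x.
Proof.
move=> [x fx]; rewrite fuzzy_imageE; last by exists x.
by case/sup_gt => [|_ [z fz <-] ltcz]; [exists (mu x), x | exists z].
Qed.

Lemma fuzzy_image_fuzzy_subset :
  is_fuzzy_subset mu -> is_fuzzy_subset (fuzzy_image f mu).
Proof.
move=> mu01 y; have [[x fx]|noimg] := pselect (exists x, f x = y); last first.
  suff -> : fuzzy_image f mu y = 0 by rewrite lexx ler01.
  by rewrite /fuzzy_image; case: pselect.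
apply/andP; split.
  by rewrite -fx; apply: le_trans (fuzzy_image_ge x); case/andP: (mu01 x).
by apply: fuzzy_image_le => [|z _]; [exists x | case/andP: (mu01 z)].
Qed.

Hypothesis f_surj : forall y, exists x, f x = y.

Lemma fuzzy_image_closed1 (g : T1 -> T1) (h : T2 -> T2) :
  (forall x, f (g x) = h (f x)) -> (forall x, mu x <= mu (g x)) ->
  forall y, fuzzy_image f mu y <= fuzzy_image f mu (h y).
Proof.
move=> fg mu_g y; apply: fuzzy_image_le => // x <-.
by rewrite -fg; apply: le_trans (mu_g x) (fuzzy_image_ge _).
Qed.

Lemma fuzzy_image_closed2 (g : T1 -> T1 -> T1) (h : T2 -> T2 -> T2) :
  (forall x1 x2, f (g x1 x2) = h (f x1) (f x2)) ->
  (forall x1 x2, Num.min (mu x1) (mu x2) <= mu (g x1 x2)) ->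
  forall y1 y2, Num.min (fuzzy_image f mu y1) (fuzzy_image f mu y2)
                <= fuzzy_image f mu (h y1 y2).
Proof.
move=> fg mu_g y1 y2; rewrite leNgt lt_min; apply/negP.
case/andP=> /(fuzzy_image_gt (f_surj _)) [x1 fx1 lt1]
            /(fuzzy_image_gt (f_surj _)) [x2 fx2 lt2].
have := le_trans (mu_g x1 x2) (fuzzy_image_ge _).
by rewrite fg fx1 fx2 leNgt lt_min lt1 lt2.
Qed.

End FuzzyImage.

Theorem theorem6p2 (R : realType) (F : fieldType) (L1 L2 : lmodType F)
  (br1 : L1 -> L1 -> L1) (al1 : L1 -> L1)
  (br2 : L2 -> L2 -> L2) (al2 : L2 -> L2) (f : L1 -> L2) (mu : L1 -> R) :
  is_hom_lie br1 al1 -> is_hom_lie br2 al2 ->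
  is_hom_lie_morphism br1 al1 br2 al2 f ->
  (forall y : L2, exists x : L1, f x = y) ->
  is_fuzzy_hom_lie_subalgebra br1 al1 mu ->
  is_fuzzy_hom_lie_subalgebra br2 al2 (fuzzy_image f mu).
Proof.
move=> _ _ [f_lin f_br f_al] f_surj [mu01 mu_add mu_scale mu_br mu_al].
have mu_ub := fuzzy_subset_has_ubound mu01.
split.
- exact: fuzzy_image_fuzzy_subset.
- exact: fuzzy_image_closed2 (lincomb_mapD f_lin) mu_add.
- by move=> c; apply: fuzzy_image_closed1 (lincomb_mapZ f_lin c) (mu_scale c).
- exact: fuzzy_image_closed2 f_br mu_br.
- exact: fuzzy_image_closed1 f_al mu_al.
Qed.
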